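(* Let $\theta>1$, $r\in(\theta^{-1},\theta^{-1/2}]$ and $s=\max\big(1,\frac{\ln\theta}{\ln(r\theta)}-2\big)$. Let $(P_1,\dots,P_n)$ be a random price sequence with values in $[1,\theta]$ and maximum $P^*$, and suppose the prediction is deterministic, $Y=y$ almost surely for a fixed $y\in[1,\theta]$. Then \[ \frac{\mathbb{E}[\mathsf{A}^1_r(P,Y)]}{\mathbb{E}[P^*]}\ \ge\ \frac1{r\theta}\,\Upsilon(y),\qquad \Upsilon(y):=\frac{\mathbb{E}\big[P^*\,\mathcal{E}(P^*,y)^{s}\big]}{\mathbb{E}[P^*]}. \]
   Context: One-max search: fix $\theta>1$. Prices $p_1,\dots,p_n\in[1,\theta]$ are revealed one at a time; the algorithm receives at the start a prediction $y\in[1,\theta]$ of the maximum price. At each step it irrevocably accepts the current price (payoff = that price) or rejects it; if nothing is accepted the payoff is $1$. Let $\varphi_r(z)=\frac{r\theta-1}{1-r}+\frac{1-r^2\theta}{1-r}\cdot\frac{z}{r\theta}$ and $\Phi^1_r(z)=\max(r\theta,\varphi_r(z))$; $\mathsf{A}^1_r$ accepts the first price $p_i\ge\Phi^1_r(y)$, and $\mathsf{A}^1_r(P,Y)$ is its payoff on the realized prices and prediction. $\mathcal{E}(a,b)=\min\{a/b,b/a\}$. *)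

From HB Require Import structures.
From mathcomp Require Import all_boot all_order all_algebra.
From mathcomp Require Import all_classical all_reals all_analysis.
Set Implicit Arguments. Unset Strict Implicit. Unset Printing Implicit Defensive.
Import Order.TTheory GRing.Theory Num.Theory.
Local Open Scope ring_scope.

Definition varphi {R : realType} (theta r z : R) : R :=
  (r * theta - 1) / (1 - r) + (1 - r ^+ 2 * theta) / (1 - r) * (z / (r * theta)).

Definition Phi1 {R : realType} (theta r z : R) : R :=
  Num.max (r * theta) (varphi theta r z).

Definition A1 {R : realType} (theta r : R) (n : nat) (p : 'I_n -> R) (y : R) : R :=
  head 1 [seq p i | i <- enum 'I_n & Phi1 theta r y <= p i].

(* Maximum of the prices (they all lie in [1, theta], n >= 1). *)
Definition maxprice {R : realType} (n : nat) (p : 'I_n -> R) : R :=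
  \big[Num.max/1]_(i < n) p i.

Definition Eratio {R : realType} (a b : R) : R := Num.min (a / b) (b / a).

From HB Require Import structures.
From mathcomp Require Import all_boot all_order all_algebra.
From mathcomp Require Import all_classical all_reals all_analysis.
From mathcomp Require Import measurable_realfun ring lra.
Set Implicit Arguments.
Unset Strict Implicit.
Unset Printing Implicit Defensive.

Import Order.TTheory GRing.Theory Num.Theory.
Local Open Scope ring_scope.

(* Fix a realisation of the prices, with maximum M and payoff A of A^1_r; it suffices to
   show M E(M, y)^s <= r theta A and integrate.  If M reaches the threshold Phi^1_r(y),
   then A >= varphi_r(y) >= y / (r theta) while M E(M, y) <= y.  If M < r theta, the
   bound holds because A >= 1.  Otherwise r theta <= M < varphi_r(y), which forces
   y >= r theta, and M E(M, y)^s <= varphi (varphi / y)^s = y (varphi / y)^(s + 1).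
   As varphi_r is the chord from (r theta, r theta) to (theta, theta / (r theta)),
   varphi / y is a convex combination of 1 / (r theta) and 1, so convexity of
   x^(s + 1) together with (r theta)^(s + 2) >= theta (the choice of s) bounds the
   last expression by r theta. *)

Section PowR.
Context {R : realType}.
Implicit Types p u w m x a : R.

Lemma powR_convex_comb p w m : 1 <= p -> 0 <= w -> 0 <= m <= 1 ->
  (m * w + (1 - m)) `^ p <= m * w `^ p + (1 - m).
Proof.
move=> p1 w0 /andP[m0 m1].
have m_itv : Itv.spec (@Itv.num_sem R) (Itv.Real `[0, 1]%Z) m.
  by rewrite /= /Itv.num_sem /= in_itv /= m0 m1 andbT ger0_real.
have := @convex_powR R p p1 (Itv.mk m_itv) w 1.
rewrite !inE /= !in_itv /= w0 ler01 => /(_ erefl erefl).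
rewrite convRE /= powR1 mulr1 => /(le_trans _); apply.
by rewrite -[1 - m]mulr1; apply: lexx.
Qed.

Lemma invr_powR_le u x p : 0 < u -> 0 < x -> x <= u `^ (p + 1) ->
  u^-1 `^ p <= u / x.
Proof.
move=> u0 x0 xu; rewrite -powR_inv1; last exact: ltW.
rewrite -powRrM mulN1r powRN.
have -> : (u `^ p)^-1 = u / u `^ (p + 1).
  rewrite powRD ?(gt_eqF u0) ?implybT // powRr1; last exact: ltW.
  by rewrite invfM mulrCA divff ?gt_eqF // mulr1.
by rewrite ler_wpM2l ?(ltW u0) // lef_pV2 ?posrE ?powR_gt0.
Qed.

Lemma le_powR_max_ln x u a : 0 < x -> 1 < u ->
  x <= u `^ (Num.max a (ln x / ln u - 2) + 2).
Proof.
move=> x0 u1; have u0 : 0 < u := lt_trans ltr01 u1.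
rewrite -ler_ln ?posrE ?powR_gt0 // ln_powR -ler_pdivrMr ?ln_gt0 //.
by rewrite -lerBlDr le_max lexx orbT.
Qed.

End PowR.

Section Eratio.
Context {R : realType}.
Variables a b : R.
Hypotheses (a_gt0 : 0 < a) (b_gt0 : 0 < b).

Lemma Eratio_gt0 : 0 < Eratio a b.
Proof. by rewrite /Eratio lt_min !divr_gt0. Qed.

Lemma Eratio_le1 : Eratio a b <= 1.
Proof. by rewrite /Eratio ge_min !ler_pdivrMr // !mul1r le_total. Qed.

Lemma mulr_Eratio_le : a * Eratio a b <= b.
Proof. by rewrite -ler_pdivlMl // mulrC /Eratio ge_min lexx orbT. Qed.

Lemma Eratio_powR_le s : 1 <= s -> Eratio a b `^ s <= Eratio a b.
Proof. by move=> s1; apply: ge1r_powR; rewrite // Eratio_gt0 Eratio_le1. Qed.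

Lemma mulr_Eratio_powR_le s : 1 <= s -> a * Eratio a b `^ s <= a.
Proof.
by move=> s1; rewrite ger_pMr // (le_trans (Eratio_powR_le s1) Eratio_le1).
Qed.

End Eratio.

Section Payoff.
Context {R : realType}.
Variables (theta r y : R) (n : nat) (p : 'I_n -> R).

Lemma A1_cases : A1 theta r p y = 1 \/ exists i, A1 theta r p y = p i.
Proof.
rewrite /A1; case E : [seq p i | i <- enum 'I_n & _] => [|x l] /=; first by left.
have : x \in [seq p i | i <- enum 'I_n & Phi1 theta r y <= p i] by rewrite E mem_head.
by case/mapP => i _ ->; right; exists i.
Qed.

Lemma A1_in b : 1 <= b -> (forall i, 1 <= p i <= b) -> 1 <= A1 theta r p y <= b.
Proof. by move=> b_ge1 p_in; have [->|[i ->]] := A1_cases; rewrite ?lexx. Qed.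

Lemma maxprice_in b : 1 <= b -> (forall i, 1 <= p i <= b) -> 1 <= maxprice p <= b.
Proof.
move=> b_ge1 p_in; rewrite bigmax_ge_id bigmax_le // => i _.
by case/andP: (p_in i).
Qed.

Lemma A1_ge_threshold : 1 < Phi1 theta r y -> Phi1 theta r y <= maxprice p ->
  Phi1 theta r y <= A1 theta r p y.
Proof.
move=> Phi_gt1; rewrite /A1.
have : all (fun x => Phi1 theta r y <= x) [seq p i | i <- enum 'I_n & Phi1 theta r y <= p i].
  by apply/allP => x /mapP[i]; rewrite mem_filter => /andP[Phi_le _] ->.
case E : [seq p i | i <- enum 'I_n & _] => [|x l] /=; last by case/andP.
move=> _; rewrite leNgt => /negP[]; apply: bigmax_lt => // i _.
rewrite ltNge; apply/negP => Phi_le.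
have : p i \in [seq p i | i <- enum 'I_n & Phi1 theta r y <= p i].
  by rewrite map_f // mem_filter Phi_le mem_enum.
by rewrite E.
Qed.

End Payoff.

Section Threshold.
Context {R : realType}.
Variables theta r : R.
Hypotheses (theta_gt1 : 1 < theta) (inv_theta_lt : theta^-1 < r).

Let theta_gt0 : 0 < theta. Proof. exact: lt_trans theta_gt1. Qed.
Let r_gt0 : 0 < r. Proof. by rewrite (lt_trans _ inv_theta_lt) ?invr_gt0. Qed.

Lemma rtheta_gt1 : 1 < r * theta.
Proof. by rewrite -ltr_pdivrMr // div1r. Qed.

Hypothesis r_le : r <= (Num.sqrt theta)^-1.

Let r2theta_le1 : r * (r * theta) <= 1.
Proof.
have sqrt_gt0 : 0 < Num.sqrt theta by rewrite sqrtr_gt0.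
have : r * Num.sqrt theta <= 1 by rewrite -ler_pdivlMr // div1r.
have -> : r * (r * theta) = (r * Num.sqrt theta) ^+ 2.
  by rewrite exprMn sqr_sqrtr ?ltW // mulrA expr2.
by rewrite expr_le1 // mulr_ge0 ?sqrtr_ge0 // ltW.
Qed.

Let r_lt1 : r < 1.
Proof. by apply: lt_le_trans r2theta_le1; rewrite ltr_pMr ?rtheta_gt1. Qed.

Let rtheta_gt0 : 0 < r * theta. Proof. exact: lt_trans rtheta_gt1. Qed.
Let rtheta_lt_theta : r * theta < theta. Proof. by rewrite gtr_pMl. Qed.
Let r_neq0 : r != 0. Proof. by rewrite gt_eqF. Qed.
Let subr1_neq0 : 1 - r != 0. Proof. by rewrite gt_eqF ?subr_gt0. Qed.
Let theta_neq0 : theta != 0. Proof. by rewrite gt_eqF. Qed.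
Let theta_subr_neq0 : theta - r * theta != 0. Proof. by rewrite gt_eqF ?subr_gt0. Qed.

Lemma varphi_le_rtheta y : y <= r * theta -> varphi theta r y <= r * theta.
Proof.
move=> y_le; rewrite -subr_le0.
have -> : varphi theta r y - r * theta =
    (1 - r * (r * theta)) * (y - r * theta) / (r * theta * (1 - r)).
  by rewrite /varphi; field; rewrite subr1_neq0 theta_neq0 r_neq0.
apply: mulr_le0_ge0; first by apply: mulr_ge0_le0; rewrite ?subr_ge0 ?subr_le0.
by rewrite invr_ge0 mulr_ge0 ?subr_ge0 ?ltW.
Qed.

Lemma le_rtheta_varphi y : y <= theta -> y <= r * theta * varphi theta r y.
Proof.
move=> y_le; rewrite -subr_ge0.
have -> : r * theta * varphi theta r y - y =
    (r * theta - 1) * (r * theta - r * y) / (1 - r).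
  by rewrite /varphi; field; rewrite subr1_neq0 theta_neq0 r_neq0.
by rewrite divr_ge0 ?mulr_ge0 ?subr_ge0 ?ler_wpM2l ?(ltW rtheta_gt1) ?(ltW r_lt1) ?(ltW r_gt0).
Qed.

Lemma varphi_powR_le y p : r * theta <= y <= theta -> 1 <= p ->
  theta <= (r * theta) `^ (p + 1) -> y * (varphi theta r y / y) `^ p <= r * theta.
Proof.
move=> /andP[y_ge y_le] p_ge1 theta_le; have y_gt0 := lt_le_trans rtheta_gt0 y_ge.
have y_neq0 : y != 0 by rewrite gt_eqF.
pose m := theta * (y - r * theta) / (y * (theta - r * theta)).
have m_ge0 : 0 <= m by rewrite divr_ge0 ?mulr_ge0 ?subr_ge0 // ?ltW.
have m_le1 : m <= 1.
  rewrite ler_pdivrMr ?mulr_gt0 ?subr_gt0 // mul1r.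
  by have := y_le; have := rtheta_gt0; nra.
have varphiE : varphi theta r y / y = m * (r * theta)^-1 + (1 - m).
  by rewrite /m /varphi; field; rewrite theta_subr_neq0 y_neq0 theta_neq0 r_neq0 subr1_neq0.
have weightsE : y * (m * (r * theta / theta) + (1 - m)) = r * theta.
  by rewrite /m; field; rewrite theta_subr_neq0 y_neq0 theta_neq0.
rewrite varphiE -[leRHS]weightsE ler_wpM2l ?(ltW y_gt0) //.
apply: le_trans (powR_convex_comb p_ge1 _ _) _; rewrite ?invr_ge0 ?(ltW rtheta_gt0) ?m_ge0 //.
by rewrite lerD2r ler_wpM2l // invr_powR_le.
Qed.

Variables s y : R.
Hypotheses (s_ge1 : 1 <= s) (theta_le : theta <= (r * theta) `^ (s + 2)).
Hypotheses (y_ge1 : 1 <= y) (y_le : y <= theta).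

Let y_gt0 : 0 < y. Proof. exact: lt_le_trans y_ge1. Qed.
Let s_ge0 : 0 <= s. Proof. exact: le_trans s_ge1. Qed.

Lemma Eratio_term_le_rtheta M : r * theta <= M < varphi theta r y ->
  M * Eratio M y `^ s <= r * theta.
Proof.
move=> /andP[M_ge M_lt].
have M_gt0 : 0 < M := lt_le_trans rtheta_gt0 M_ge.
have varphi_gt0 : 0 < varphi theta r y := lt_trans M_gt0 M_lt.
have y_ge : r * theta <= y.
  rewrite leNgt; apply/negP => /ltW /varphi_le_rtheta.
  by rewrite leNgt (le_lt_trans M_ge M_lt).
have powR_le a b : 0 <= a -> a <= b -> a `^ s <= b `^ s.
  by move=> a_ge0 ab; rewrite ge0_ler_powR // nnegrE (le_trans a_ge0).
apply: (@le_trans _ _ (M * (M / y) `^ s)).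
  have E_ge0 := ltW (Eratio_gt0 M_gt0 y_gt0).
  by rewrite ler_wpM2l ?(ltW M_gt0) ?powR_le // /Eratio ge_min lexx.
apply: (@le_trans _ _ (varphi theta r y * (varphi theta r y / y) `^ s)).
  by rewrite ler_pM ?powR_ge0 ?powR_le ?ler_pM2r ?invr_gt0 ?divr_ge0 // ?ltW.
have q_gt0 : 0 < varphi theta r y / y by rewrite divr_gt0.
have -> : varphi theta r y * (varphi theta r y / y) `^ s =
    y * (varphi theta r y / y) `^ (s + 1).
  rewrite powRD ?(gt_eqF q_gt0) ?implybT // powRr1 ?(ltW q_gt0) //.
  by rewrite mulrCA [y * _]mulrC divfK ?gt_eqF // mulrC.
by apply: varphi_powR_le; rewrite ?y_ge ?lerDr // -addrA.
Qed.

Lemma Eratio_term_le_payoff M A : 0 < M -> 1 <= A ->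
    (Phi1 theta r y <= M -> Phi1 theta r y <= A) ->
  M * Eratio M y `^ s <= r * theta * A.
Proof.
move=> M_gt0 A_ge1 reached.
have [Phi_le | M_lt] := leP (Phi1 theta r y) M.
  apply: (@le_trans _ _ y).
    apply: le_trans _ (mulr_Eratio_le y M_gt0).
    by rewrite ler_wpM2l ?(ltW M_gt0) ?Eratio_powR_le.
  apply: le_trans (le_rtheta_varphi y_le) _; rewrite ler_wpM2l ?(ltW rtheta_gt0) //.
  by apply: le_trans (reached Phi_le); rewrite /Phi1 le_max lexx orbT.
apply: (@le_trans _ _ (r * theta)); last by rewrite ler_peMr ?(ltW rtheta_gt0).
have [M_lt_rtheta | rtheta_le_M] := ltP M (r * theta).
  exact: le_trans (mulr_Eratio_powR_le M_gt0 y_gt0 s_ge1) (ltW M_lt_rtheta).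
apply: Eratio_term_le_rtheta; rewrite rtheta_le_M /=.
by move: M_lt; rewrite /Phi1 lt_max ltNge rtheta_le_M.
Qed.

Lemma maxprice_Eratio_le_A1 n (p : 'I_n -> R) : (forall i, 1 <= p i) ->
  maxprice p * Eratio (maxprice p) y `^ s <= r * theta * A1 theta r p y.
Proof.
move=> p_ge1; apply: Eratio_term_le_payoff.
- exact: lt_le_trans ltr01 (bigmax_ge_id _ _ _ _).
- by have [->|[i ->]] := A1_cases theta r y p.
- by apply: A1_ge_threshold; rewrite (lt_le_trans rtheta_gt1) // le_max lexx.
Qed.

End Threshold.

Section Measurability.
Context d (T : measurableType d) (R : realType).

Lemma measurable_bigmaxr (I : Type) (s : seq I) (x0 : R) (f : I -> T -> R) :
  (forall i, measurable_fun setT (f i)) ->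
  measurable_fun setT (fun t => \big[Num.max/x0]_(i <- s) f i t).
Proof.
move=> mf; elim: s => [|i s IH].
  by under eq_fun do rewrite big_nil; exact: measurable_cst.
by under eq_fun do rewrite big_cons; exact: measurable_maxr.
Qed.

Lemma measurable_A1 (theta r y : R) n (X : 'I_n -> T -> R) :
  (forall i, measurable_fun setT (X i)) ->
  measurable_fun setT (fun t => A1 theta r (fun i => X i t) y).
Proof.
move=> mX; rewrite /A1; elim: (enum 'I_n) => [|i s IH] /=.
  exact: measurable_cst.
under eq_fun do rewrite (fun_if (map _)) (fun_if (head 1)) /=.
by apply: measurable_fun_ifT => //; apply: measurable_fun_ler => //; exact: measurable_cst.
Qed.

Lemma measurable_Eratio (f : T -> R) (b : R) :
  measurable_fun setT f -> (forall t, 0 <= f t) ->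
  measurable_fun setT (fun t => Eratio (f t) b).
Proof.
move=> mf f_ge0; rewrite /Eratio.
have -> : (fun t => Num.min (f t / b) (b / f t)) =
    (fun t => Num.min (f t / b) (b * f t `^ (-1))).
  by apply/funext => t; rewrite powR_inv1.
apply: measurable_minr.
  by apply: measurable_funM => //; exact: measurable_cst.
apply: measurable_funM; first exact: measurable_cst.
exact: measurableT_comp (measurable_powR _) mf.
Qed.

End Measurability.

Section FiniteMeasure.
Context d (T : measurableType d) (R : realType).
Variable mu : {finite_measure set T -> \bar R}.

Lemma bounded_integrable (f : T -> R) (b : R) :
  measurable_fun setT f -> (forall t, `|f t| <= b) -> mu.-integrable setT (EFin \o f).
Proof.
move=> mf f_le; apply: measurable_bounded_integrable => //.
  by rewrite ltey_eq fin_num_measure.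
apply: filterS _ (nbhs_pinfty_ge (num_real b)) => M /= b_le t _.
exact: le_trans (f_le t) b_le.
Qed.

Lemma le_RintegralZl (f g : T -> R) (c : R) :
  mu.-integrable setT (EFin \o f) -> mu.-integrable setT (EFin \o g) ->
  (forall t, f t <= c * g t) -> Rintegral mu setT f <= c * Rintegral mu setT g.
Proof.
move=> int_f int_g fg; rewrite -RintegralZl //.
apply: le_Rintegral => //.
by apply: eq_integrable (integrableZl _ c int_g) => // t _; rewrite /= EFinM.
Qed.

End FiniteMeasure.

Section RandomPrices.
Context d (T : measurableType d) (R : realType).
Variable mu : {finite_measure set T -> \bar R}.
Variables (n : nat) (X : 'I_n -> T -> R) (b : R).
Hypotheses (mX : forall i, measurable_fun setT (X i)) (b_ge1 : 1 <= b).
Hypothesis X_in : forall i t, 1 <= X i t <= b.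

Let maxprice_X_in t : 1 <= maxprice (X^~ t) <= b := maxprice_in b_ge1 (X_in^~ t).

Lemma integrable_A1 theta r y :
  mu.-integrable setT (EFin \o (fun t => A1 theta r (X^~ t) y)).
Proof.
apply: (@bounded_integrable _ _ _ mu _ b (measurable_A1 _ _ _ mX)) => t.
have /andP[A_ge1 A_le] := A1_in theta r y b_ge1 (X_in^~ t).
by rewrite ger0_norm // (le_trans ler01).
Qed.

Lemma integrable_maxprice_Eratio s y : 1 <= s -> 0 < y ->
  mu.-integrable setT (EFin \o (fun t => maxprice (X^~ t) * Eratio (maxprice (X^~ t)) y `^ s)).
Proof.
move=> s_ge1 y_gt0.
have M_gt0 t : 0 < maxprice (X^~ t) by case/andP: (maxprice_X_in t) => /(lt_le_trans ltr01).
have mM : measurable_fun setT (fun t => maxprice (X^~ t)) := measurable_bigmaxr _ _ mX.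
apply: (@bounded_integrable _ _ _ mu _ b) => [|t].
  apply: measurable_funM => //; apply: measurableT_comp (measurable_powR _) _.
  by apply: measurable_Eratio => // t; exact: ltW.
rewrite ger0_norm ?mulr_ge0 ?powR_ge0 ?(ltW (M_gt0 t)) //.
exact: le_trans (mulr_Eratio_powR_le (M_gt0 t) y_gt0 s_ge1) (andP (maxprice_X_in t)).2.
Qed.

End RandomPrices.

Theorem corollary2 (d : measure_display) (T : measurableType d) (R : realType)
    (P : probability T R) (n : nat) (X : 'I_n -> T -> R) (theta r y : R) :
  1 < theta ->
  theta^-1 < r -> r <= (Num.sqrt theta)^-1 ->
  (0 < n)%N ->
  (forall i, measurable_fun setT (X i)) ->
  (forall i w, 1 <= X i w <= theta) ->
  1 <= y <= theta ->
  let s := Num.max 1 (ln theta / ln (r * theta) - 2) in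
  let Pstar := fun w => maxprice (fun i => X i w) in
  let Upsilon := Rintegral P setT (fun w => Pstar w * powR (Eratio (Pstar w) y) s)
                 / Rintegral P setT Pstar in
  Rintegral P setT (fun w => A1 theta r (fun i => X i w) y) / Rintegral P setT Pstar
    >= (r * theta)^-1 * Upsilon.
Proof.
move=> theta_gt1 inv_theta_lt r_le _ mX X_in /andP[y_ge1 y_le]; cbv zeta.
set s := Num.max 1 _; set Pstar := fun w => maxprice _.
have rtheta_gt1 := rtheta_gt1 theta_gt1 inv_theta_lt.
have s_ge1 : 1 <= s by rewrite le_max lexx.
have theta_le := le_powR_max_ln 1 (lt_trans ltr01 theta_gt1) rtheta_gt1.
have X_ge1 w i : 1 <= X i w := (andP (X_in i w)).1.
rewrite mulrA ler_wpM2r ?invr_ge0 ?Rintegral_ge0 //; first by move=> w _;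
  exact: le_trans ler01 (bigmax_ge_id _ _ _ _).
rewrite ler_pdivrMl ?(lt_trans ltr01) //; apply: le_RintegralZl => [||w].
- exact (integrable_maxprice_Eratio P mX (ltW theta_gt1) X_in s_ge1 (lt_le_trans ltr01 y_ge1)).
- exact (integrable_A1 P mX (ltW theta_gt1) X_in theta r y).
- exact (maxprice_Eratio_le_A1 theta_gt1 inv_theta_lt r_le s_ge1 theta_le y_ge1 y_le
    (X_ge1 w)).
Qed.
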